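(* Let $k\geq 1$ and $p$ a propositional variable. Then $\mathbf{GLP}\vdash[1]Q^k(p)$, and $Q^k(p)$ is a conjunction of $k$ instances of reflection $[0]\chi\to\chi$. Moreover, if $\sigma$ is a substitution such that $\mathbf{GLP}\vdash\bigwedge_{i=1}^j([0]\psi_i\to\psi_i)\to\sigma(p)$ for some $j\leq k$ and some formulas $\psi_1,\dots,\psi_j$, then $\sigma$ is a unifier of $[1]p$ and $\sigma\leq Q^k$. That is, $Q^k$ is the most general unifier of $[1]p$ among those following from at most $k$ instances of reflection.
   Context: $\mathbf{GLP}$ is the propositional polymodal logic with modalities $[0],[1],\dots$ ($\langle k\rangle:=\neg[k]\neg$) axiomatized by classical tautologies; $[k](\phi\to\psi)\to([k]\phi\to[k]\psi)$; $[k]([k]\phi\to\phi)\to[k]\phi$; $\langle j\rangle\phi\to[k]\langle j\rangle\phi$ for $j<k$; $[j]\phi\to[k]\phi$ for $j\leq k$; rules modus ponens and necessitation. A substitution commutes with all connectives and modalities; a unifier of $[1]p$ is a substitution $\sigma$ with $\mathbf{GLP}\vdash[1]\sigma(p)$. $\tau\leq\sigma$ means there is a substitution $\theta$ with $\mathbf{GLP}\vdash\tau(q)\leftrightarrow\theta(\sigma(q))$ for every variable $q$; $Q^k$ also denotes the substitution $p\mapsto Q^k(p)$. Define $Q_1(p):=p$, $Q_{i+1}(p):=p\lor[0]Q_i(p)$, $Q^k(p):=\bigwedge_{i=1}^k([0]Q_i(p)\to Q_i(p))$. *)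

From Stdlib Require Import Arith List PeanoNat.
Import ListNotations.

Inductive form : Type :=
| Var : nat -> form
| Bot : form
| Imp : form -> form -> form
| Box : nat -> form -> form.

Definition Neg (a : form) : form := Imp a Bot.
Definition Top : form := Neg Bot.
Definition Or (a b : form) : form := Imp (Neg a) b.
Definition And (a b : form) : form := Neg (Imp a (Neg b)).
Definition Iff (a b : form) : form := And (Imp a b) (Imp b a).
Definition Dia (k : nat) (a : form) : form := Neg (Box k (Neg a)).

(* Classical tautologies: formulas true under every boolean valuation in which
   variables and modal formulas [k]phi are treated as propositional atoms. *)
Fixpoint beval (v : form -> bool) (f : form) : bool :=
  match f with
  | Var n => v (Var n)
  | Bot => false
  | Imp a b => implb (beval v a) (beval v b)
  | Box k a => v (Box k a)
  end.

Definition tautology (f : form) : Prop := forall v : form -> bool, beval v f = true.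

Inductive GLP : form -> Prop :=
| glp_taut : forall f, tautology f -> GLP f
| glp_K : forall k a b, GLP (Imp (Box k (Imp a b)) (Imp (Box k a) (Box k b)))
| glp_L : forall k a, GLP (Imp (Box k (Imp (Box k a) a)) (Box k a))
| glp_neg : forall j k a, j < k -> GLP (Imp (Dia j a) (Box k (Dia j a)))
| glp_mono : forall j k a, j <= k -> GLP (Imp (Box j a) (Box k a))
| glp_mp : forall a b, GLP (Imp a b) -> GLP a -> GLP b
| glp_nec : forall k a, GLP a -> GLP (Box k a).

Definition subst := nat -> form.

Fixpoint apply_subst (s : subst) (f : form) : form :=
  match f with
  | Var n => s n
  | Bot => Bot
  | Imp a b => Imp (apply_subst s a) (apply_subst s b)
  | Box k a => Box k (apply_subst s a)
  end.

(* tau <= sigma : tau is an instance of sigma modulo GLP-equivalence. *)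
Definition subst_le (tau sigma : subst) : Prop :=
  exists theta : subst, forall q : nat,
    GLP (Iff (tau q) (apply_subst theta (sigma q))).

Definition unifier_Box1 (p : nat) (sigma : subst) : Prop :=
  GLP (Box 1 (sigma p)).

Fixpoint bigAnd (l : list form) : form :=
  match l with
  | [] => Top
  | [x] => x
  | x :: xs => And x (bigAnd xs)
  end.

Definition refl0 (chi : form) : form := Imp (Box 0 chi) chi.

Fixpoint Qi (i : nat) (f : form) : form :=
  match i with
  | 0 => f (* unused: indices start at 1 *)
  | 1 => f
  | S i' => Or f (Box 0 (Qi i' f))
  end.

Definition Qk (k : nat) (f : form) : form :=
  bigAnd (map (fun i => refl0 (Qi i f)) (seq 1 k)).

Definition Qsubst (k p : nat) : subst :=
  fun q => if Nat.eqb q p then Qk k (Var p) else Var q.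

(* Q^k(p) is a conjunction of reflection instances, and every reflection
   instance is [1]-provable: <0>~chi implies [1]<0>~chi, and [0]~~chi
   implies [1]~~chi, and either implies [1]([0]chi -> chi).
   Now let sigma(p) follow from at most k reflections [0]psi_i -> psi_i; it
   is then [1]-provable, like its premises.  Either no [0]psi_i holds, and
   then all the reflections hold, or some [0]psi_i holds; by transitivity of
   [0] we may then reason under [0] with psi_i available, i.e. with one
   reflection fewer.  Induction on the number of reflections gives
   GLP |- Q_{k+1}(sigma p), and the reflections in Q^k(sigma p) let Q_{k+1}
   descend to Q_1 = sigma p.  Hence sigma(p) and Q^k(sigma p) are
   GLP-equivalent, which exhibits sigma as the instance of Q^k under sigma
   itself. *)
From Stdlib Require Import Arith List Lia Bool.
Import ListNotations.

Lemma beval_bigAnd v l : beval v (bigAnd l) = forallb (beval v) l.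
Proof.
  induction l as [|a l IH]; [reflexivity|].
  destruct l as [|b l]; simpl in *.
  - now rewrite andb_true_r.
  - rewrite IH. now destruct (beval v a), (_ && _).
Qed.

Lemma apply_subst_bigAnd s l :
  apply_subst s (bigAnd l) = bigAnd (map (apply_subst s) l).
Proof.
  induction l as [|a l IH]; [reflexivity|].
  destruct l as [|b l]; [reflexivity|].
  simpl in *. now rewrite IH.
Qed.

Lemma Qi_SS i f : Qi (S (S i)) f = Or f (Box 0 (Qi (S i) f)).
Proof. reflexivity. Qed.

Lemma apply_subst_Qi s i p : apply_subst s (Qi i (Var p)) = Qi i (s p).
Proof.
  induction i as [|[|i] IH]; [reflexivity..|].
  rewrite !Qi_SS. unfold Or, Neg. cbn [apply_subst]. now rewrite IH.
Qed.

Lemma apply_subst_Qk s k p : apply_subst s (Qk k (Var p)) = Qk k (s p).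
Proof.
  unfold Qk. rewrite apply_subst_bigAnd, map_map.
  apply f_equal, map_ext. intro i. simpl. now rewrite apply_subst_Qi.
Qed.

Arguments bigAnd : simpl never.

Ltac prove_tautology :=
  let v := fresh "v" in
  intro v; unfold Iff, And, Or, Top, Dia, Neg, refl0; simpl;
  rewrite ?beval_bigAnd, ?map_app, ?forallb_app; simpl;
  repeat match goal with
  | |- context [beval v ?a] => destruct (beval v a)
  | |- context [forallb ?f ?l] => destruct (forallb f l)
  | |- context [v ?a] => destruct (v a)
  end; reflexivity.

Lemma glp_taut_mp1 a c : tautology (Imp a c) -> GLP a -> GLP c.
Proof. intros T. apply glp_mp, glp_taut, T. Qed.

Lemma glp_taut_mp2 a b c :
  tautology (Imp a (Imp b c)) -> GLP a -> GLP b -> GLP c.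
Proof. intros T Ha. apply glp_mp, (glp_mp _ _ (glp_taut _ T) Ha). Qed.

Lemma glp_taut_mp3 a b d c :
  tautology (Imp a (Imp b (Imp d c))) -> GLP a -> GLP b -> GLP d -> GLP c.
Proof.
  intros T Ha Hb. apply glp_mp, (glp_mp _ _ (glp_mp _ _ (glp_taut _ T) Ha) Hb).
Qed.

Lemma glp_taut_mp4 a b d e c :
  tautology (Imp a (Imp b (Imp d (Imp e c)))) ->
  GLP a -> GLP b -> GLP d -> GLP e -> GLP c.
Proof.
  intros T Ha Hb Hd.
  apply glp_mp, (glp_mp _ _ (glp_mp _ _ (glp_mp _ _ (glp_taut _ T) Ha) Hb) Hd).
Qed.

Lemma glp_imp_trans a b c : GLP (Imp a b) -> GLP (Imp b c) -> GLP (Imp a c).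
Proof. apply glp_taut_mp2. prove_tautology. Qed.

Lemma glp_box_mono k a b : GLP (Imp a b) -> GLP (Imp (Box k a) (Box k b)).
Proof. intro H. apply (glp_mp _ _ (glp_K k a b)), glp_nec, H. Qed.

Lemma glp_box_and k a b : GLP (Imp (Box k a) (Imp (Box k b) (Box k (And a b)))).
Proof.
  assert (Hab : GLP (Imp (Box k a) (Box k (Imp b (And a b))))).
  { apply glp_box_mono, glp_taut. prove_tautology. }
  generalize (glp_K k b (And a b)). revert Hab.
  apply glp_taut_mp2. prove_tautology.
Qed.

(* Transitivity from Loeb's axiom applied to a /\ [k]a. *)
Lemma glp_box4 k a : GLP (Imp (Box k a) (Box k (Box k a))).
Proof.
  set (c := And a (Box k a)).
  assert (Hca : GLP (Imp (Box k c) (Box k a))).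
  { apply glp_box_mono, glp_taut. unfold c. prove_tautology. }
  assert (Hac : GLP (Imp (Box k a) (Box k (Imp (Box k c) c)))).
  { apply glp_box_mono. revert Hca. apply glp_taut_mp1. unfold c. prove_tautology. }
  assert (Hcbox : GLP (Imp (Box k c) (Box k (Box k a)))).
  { apply glp_box_mono, glp_taut. unfold c. prove_tautology. }
  apply (glp_imp_trans _ _ _ Hac), (glp_imp_trans _ _ _ (glp_L k c)), Hcbox.
Qed.

(* Case split on [0]~~a: otherwise <0>~a holds, and is boxed by glp_neg. *)
Lemma glp_box1_refl0 a : GLP (Box 1 (refl0 a)).
Proof.
  pose proof (glp_neg 0 1 (Neg a) ltac:(lia)) as Hneg.
  assert (Hdia : GLP (Imp (Box 1 (Dia 0 (Neg a))) (Box 1 (refl0 a)))).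
  { apply glp_box_mono.
    assert (Hdn : GLP (Imp (Box 0 a) (Box 0 (Neg (Neg a))))).
    { apply glp_box_mono, glp_taut. prove_tautology. }
    revert Hdn. apply glp_taut_mp1. prove_tautology. }
  pose proof (glp_mono 0 1 (Neg (Neg a)) ltac:(lia)) as Hmono.
  assert (Hnn : GLP (Imp (Box 1 (Neg (Neg a))) (Box 1 (refl0 a)))).
  { apply glp_box_mono, glp_taut. prove_tautology. }
  revert Hneg Hdia Hmono Hnn. apply glp_taut_mp4. prove_tautology.
Qed.

Lemma glp_box_bigAnd k l :
  (forall e, In e l -> GLP (Box k e)) -> GLP (Box k (bigAnd l)).
Proof.
  induction l as [|a l IH]; intro Hl.
  - apply glp_nec, glp_taut. prove_tautology.
  - assert (Hcons : GLP (Imp (Box k (And a (bigAnd l))) (Box k (bigAnd (a :: l))))).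
    { apply glp_box_mono, glp_taut. prove_tautology. }
    generalize (IH (fun e He => Hl e (or_intror He))) (Hl a (or_introl eq_refl)).
    revert Hcons. generalize (glp_box_and k a (bigAnd l)).
    apply glp_taut_mp4. prove_tautology.
Qed.

Lemma glp_box1_bigAnd_refl0 l : GLP (Box 1 (bigAnd (map refl0 l))).
Proof.
  apply glp_box_bigAnd. intros e He. apply in_map_iff in He.
  destruct He as [a [<- _]]. apply glp_box1_refl0.
Qed.

Lemma glp_bigAnd_intro c l :
  (forall e, In e l -> GLP (Imp c e)) -> GLP (Imp c (bigAnd l)).
Proof.
  induction l as [|a l IH]; intro Hl.
  - apply glp_taut. prove_tautology.
  - generalize (IH (fun e He => Hl e (or_intror He))) (Hl a (or_introl eq_refl)).
    apply glp_taut_mp2. prove_tautology.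
Qed.

Lemma glp_bigAnd_elim e l : In e l -> GLP (Imp (bigAnd l) e).
Proof.
  intro He. apply glp_taut. intro v. simpl. rewrite beval_bigAnd.
  destruct (forallb (beval v) l) eqn:E; [|reflexivity].
  rewrite forallb_forall in E. now rewrite (E e He).
Qed.

(* Reflections [0]psi -> psi hold trivially unless some [0]psi does. *)
Lemma glp_refl0_cases L C D :
  (forall psi, In psi L -> GLP (Imp C (Imp (Box 0 psi) D))) ->
  GLP (Imp C (Imp (bigAnd (map refl0 L)) D)) -> GLP (Imp C D).
Proof.
  revert C. induction L as [|psi L IH]; intros C Hbox Hrefl.
  - revert Hrefl. apply glp_taut_mp1. prove_tautology.
  - assert (Hnot : GLP (Imp (And C (Neg (Box 0 psi))) D)).
    { apply IH.
      + intros phi Hphi. generalize (Hbox phi (or_intror Hphi)).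
        apply glp_taut_mp1. prove_tautology.
      + revert Hrefl. apply glp_taut_mp1. prove_tautology. }
    generalize (Hbox psi (or_introl eq_refl)). revert Hnot.
    apply glp_taut_mp2. prove_tautology.
Qed.

Definition box0_persistent (B : form) : Prop := GLP (Imp B (Box 0 B)).

Lemma box0_persistent_Top : box0_persistent Top.
Proof.
  assert (H : GLP (Box 0 Top)) by (apply glp_nec, glp_taut; prove_tautology).
  revert H. apply glp_taut_mp1. prove_tautology.
Qed.

Lemma box0_persistent_box B psi : box0_persistent B ->
  GLP (Imp (And B (Box 0 psi)) (Box 0 (And B (And psi (Box 0 psi))))).
Proof.
  intro HB.
  generalize (glp_box4 0 psi) (glp_box_and 0 psi (Box 0 psi))
    (glp_box_and 0 B (And psi (Box 0 psi))).
  revert HB. apply glp_taut_mp4. prove_tautology.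
Qed.

Lemma box0_persistent_and_box B psi : box0_persistent B ->
  box0_persistent (And B (And psi (Box 0 psi))).
Proof.
  intro HB. eapply glp_imp_trans; [|exact (box0_persistent_box B psi HB)].
  apply glp_taut. prove_tautology.
Qed.

(* Each hypothesis [0]psi lets us pass under [0] carrying psi, which
   discharges its own reflection instance. *)
Lemma box0_persistent_Qi n : forall L B x, length L <= n -> box0_persistent B ->
  GLP (Imp B (Imp (bigAnd (map refl0 L)) x)) -> GLP (Imp B (Qi (S n) x)).
Proof.
  induction n as [|n IH]; intros L B x Hlen HB Hx.
  - destruct L; [|simpl in Hlen; lia].
    revert Hx. apply glp_taut_mp1. prove_tautology.
  - rewrite Qi_SS. apply (glp_refl0_cases L); [|revert Hx; apply glp_taut_mp1; prove_tautology].
    intros psi Hin. destruct (in_split _ _ Hin) as [l1 [l2 ->]].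
    set (B' := And B (And psi (Box 0 psi))).
    assert (HQ : GLP (Imp B' (Qi (S n) x))).
    { apply (IH (l1 ++ l2)); [|apply box0_persistent_and_box, HB|].
      - rewrite length_app in *. simpl in Hlen. lia.
      - revert Hx. apply glp_taut_mp1. unfold B'. prove_tautology. }
    generalize (box0_persistent_box B psi HB) (glp_box_mono 0 _ _ HQ).
    apply glp_taut_mp2. unfold B'. prove_tautology.
Qed.

Lemma glp_Qi_of_refl0 k x psis : length psis <= k ->
  GLP (Imp (bigAnd (map refl0 psis)) x) -> GLP (Qi (S k) x).
Proof.
  intros Hlen Hx.
  assert (HQ : GLP (Imp Top (Qi (S k) x))).
  { apply (box0_persistent_Qi k psis); [exact Hlen|exact box0_persistent_Top|].
    revert Hx. apply glp_taut_mp1. prove_tautology. }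
  revert HQ. apply glp_taut_mp1. prove_tautology.
Qed.

Lemma imp_Qi x m : tautology (Imp x (Qi m x)).
Proof. destruct m as [|[|m]]; [prove_tautology..|]. rewrite Qi_SS. prove_tautology. Qed.

Lemma glp_imp_Qk k x : GLP (Imp x (Qk k x)).
Proof.
  apply glp_bigAnd_intro. intros e He. apply in_map_iff in He.
  destruct He as [i [<- _]]. generalize (glp_taut _ (imp_Qi x i)).
  apply glp_taut_mp1. prove_tautology.
Qed.

(* Q_{m+1} = x \/ [0]Q_m descends to Q_m by the reflection for Q_m in Q^k. *)
Lemma glp_Qk_Qi_imp k x m : m <= S k -> GLP (Imp (Qk k x) (Imp (Qi m x) x)).
Proof.
  induction m as [|[|m] IH]; intro Hm; [apply glp_taut; prove_tautology..|].
  assert (Hrefl : GLP (Imp (Qk k x) (refl0 (Qi (S m) x)))).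
  { apply glp_bigAnd_elim, in_map_iff. exists (S m).
    split; [reflexivity|]. apply in_seq. lia. }
  rewrite Qi_SS. generalize (IH ltac:(lia)) Hrefl (glp_taut _ (imp_Qi x (S m))).
  apply glp_taut_mp3. prove_tautology.
Qed.

Theorem mainTheorem12 (k : nat) (p : nat) (hk : 1 <= k) :
  GLP (Box 1 (Qk k (Var p)))
  /\ (exists chis : list form, length chis = k /\ Qk k (Var p) = bigAnd (map refl0 chis))
  /\ (forall sigma : subst,
        (exists (j : nat) (psis : list form),
            j <= k /\ length psis = j /\
            GLP (Imp (bigAnd (map refl0 psis)) (sigma p))) ->
        unifier_Box1 p sigma /\ subst_le sigma (Qsubst k p)).
Proof.
  split; [|split].
  - unfold Qk. rewrite <- map_map with (g := refl0). apply glp_box1_bigAnd_refl0.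
  - exists (map (fun i => Qi i (Var p)) (seq 1 k)). split.
    + now rewrite length_map, length_seq.
    + unfold Qk. now rewrite map_map.
  - intros sigma [j [psis [Hj [<- Hsigma]]]]. split.
    + exact (glp_mp _ _ (glp_mp _ _ (glp_K _ _ _) (glp_nec 1 _ Hsigma))
               (glp_box1_bigAnd_refl0 psis)).
    + exists sigma. intro q. unfold Qsubst.
      destruct (Nat.eqb_spec q p) as [-> | _].
      * rewrite apply_subst_Qk.
        generalize (glp_imp_Qk k (sigma p))
          (glp_Qk_Qi_imp k (sigma p) (S k) (le_n _))
          (glp_Qi_of_refl0 k _ psis Hj Hsigma).
        apply glp_taut_mp3. prove_tautology.
      * apply glp_taut. prove_tautology.
Qed.
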